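(* Let $\Theta$ be a parameter space. For a set function $C:[0,1]\to2^{\Theta}$, $C\in\mathrm{ECI}(\Theta)$ if and only if $C$ is nonincreasing and continuous from above (i.e. $C(\alpha)=\bigcup_{\beta>\alpha}C(\beta)$ for every $\alpha\in[0,1)$).
   Context: The underlying probability space is assumed to carry a random variable $U$ that is standard uniform under every parameter $\theta\in\Theta$. An e-value family for $\Theta$ is $(E(\theta))_{\theta\in\Theta}$ with $E(\theta)\ge0$ and $\mathbb{E}_\theta[E(\theta)]\le1$ for every $\theta$. $\mathrm{ECI}(\Theta)$ is the set of all $C:[0,1]\to2^\Theta$ that are a possible realization of an e-CI, i.e. for which there exists an e-value family $E$ and a possible realization of it (under some true parameter $\theta^*\in\Theta$) such that $C(\alpha)=\{\theta\in\Theta:E(\theta)<1/\alpha\}$ for all $\alpha\in[0,1)$, with the convention $1/0=\infty$. *)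

From HB Require Import structures.
From mathcomp Require Import all_boot all_order all_algebra.
From mathcomp Require Import all_classical all_reals all_analysis.
From mathcomp Require Import measurable_realfun lebesgue_integral.
Set Implicit Arguments. Unset Strict Implicit. Unset Printing Implicit Defensive.
Import Order.TTheory GRing.Theory Num.Theory.
Local Open Scope classical_set_scope.
Local Open Scope ring_scope.

Definition einv (R : realType) (a : R) : \bar R :=
  if a == 0 then +oo%E else (a^-1)%:E.

Definition std_uniform_under_all d (Omega : measurableType d) (R : realType)
  (Theta : Type) (P : Theta -> probability Omega R) (U : Omega -> R) : Prop :=
  measurable_fun setT U /\
  forall (th : Theta) (x : R), 0 <= x <= 1 ->
    P th (U @^-1` `]-oo, x]) = x%:E.

Definition e_value_family d (Omega : measurableType d) (R : realType)
  (Theta : Type) (P : Theta -> probability Omega R)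
  (E : Theta -> Omega -> \bar R) : Prop :=
  forall th : Theta,
    [/\ measurable_fun [set: Omega] (E th : Omega -> \bar R),
        (forall w, (0 <= E th w)%E) &
        (\int[P th]_w E th w <= 1)%E].

(* C : [0,1] -> 2^Theta (represented as R -> set Theta; only alpha in [0,1]
   matters) is a possible realization of an e-CI. *)
Definition ECI d (Omega : measurableType d) (R : realType)
  (Theta : Type) (P : Theta -> probability Omega R) (C : R -> set Theta) : Prop :=
  exists E : Theta -> Omega -> \bar R, e_value_family P E /\
  exists (thstar : Theta) (w : Omega),
    forall alpha : R, 0 <= alpha <= 1 ->
      C alpha = [set th | (E th w < einv alpha)%E].

Definition set_nonincreasing (R : realType) (Theta : Type) (C : R -> set Theta) :=
  forall a b : R, 0 <= a -> a <= b -> b <= 1 -> C b `<=` C a.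

Definition cont_from_above (R : realType) (Theta : Type) (C : R -> set Theta) :=
  forall a : R, 0 <= a -> a < 1 ->
    C a = \bigcup_(b in [set b : R | a < b /\ b <= 1]) C b.

From HB Require Import structures.
From mathcomp Require Import all_boot all_order all_algebra.
From mathcomp Require Import all_classical all_reals all_analysis.
From mathcomp Require Import measurable_realfun lebesgue_integral.
From mathcomp Require Import lra.
Set Implicit Arguments. Unset Strict Implicit. Unset Printing Implicit Defensive.
Import Order.TTheory GRing.Theory Num.Theory.
Local Open Scope classical_set_scope.
Local Open Scope ring_scope.

(* If [C a = [set th | E th w < 1/a]] for a fixed outcome [w], then [C] is
   nonincreasing because [a |-> 1/a] is, and continuous from above because
   [r < 1/a] implies [r < 1/b] for every [b] slightly above [a].
   Conversely, [th] must be rejected at every level [b] with [~ C b th], so the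
   least admissible value of [E th w] is the supremum of [1/b] over these [b];
   monotonicity and continuity from above of [C] give back
   [C a = [set th | sup < 1/a]].  This value is realised at [w] by an e-value
   supported on the event [U = U w], which is null under every parameter since
   [U] has a continuous distribution. *)

Section einv.
Variable R : realType.
Implicit Types (a b r : R) (x : \bar R).

Lemma einv_gt0 a : 0 <= a -> (0 < einv a)%E.
Proof.
rewrite /einv le_eqVlt => /predU1P[<-|a_gt0]; first by rewrite eqxx ltry.
by rewrite gt_eqF // lte_fin invr_gt0.
Qed.

Lemma einv_le a b : 0 <= a -> a <= b -> (einv b <= einv a)%E.
Proof.
rewrite /einv le_eqVlt => /predU1P[<-|a_gt0] ab; first by rewrite eqxx leey.
have b_gt0 := lt_le_trans a_gt0 ab.
by rewrite !gt_eqF // lee_fin lef_pV2 ?posrE.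
Qed.

Lemma einv_lt a b : 0 <= a -> a < b -> (einv b < einv a)%E.
Proof.
rewrite /einv le_eqVlt => /predU1P[<-|a_gt0] ab; first by rewrite eqxx gt_eqF ?ltry.
have b_gt0 := lt_trans a_gt0 ab.
by rewrite !gt_eqF // lte_fin ltf_pV2 ?posrE.
Qed.

Lemma lte_einv a r : 0 <= a -> (r%:E < einv a)%E = (a * r < 1).
Proof.
rewrite /einv le_eqVlt => /predU1P[<-|a_gt0]; first by rewrite eqxx ltry mul0r ltr01.
by rewrite gt_eqF // lte_fin -(ltr_pM2l a_gt0) mulfV ?gt_eqF.
Qed.

Lemma mulr_lt1_right_nbhs a r : 0 <= a < 1 -> a * r < 1 ->
  exists2 b, a < b <= 1 & b * r < 1.
Proof.
move=> /andP[a_ge0 a_lt1] ar_lt1; have [r_le0|r_gt0] := leP r 0.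
  by exists 1; [rewrite a_lt1 lexx | lra].
pose s := r^-1; have rs : r * s = 1 by rewrite mulfV ?gt_eqF.
have s_gt0 : 0 < s by rewrite invr_gt0.
have a_lt_s : a < s by nra.
exists (Num.min 1 ((a + s) / 2)).
  by rewrite lt_min a_lt1 ge_min lexx /=; lra.
have : Num.min 1 ((a + s) / 2) <= (a + s) / 2 by rewrite ge_min lexx orbT.
nra.
Qed.

Lemma einv_right_cont a x : 0 <= a < 1 -> (x < einv a)%E ->
  exists2 b, a < b <= 1 & (x < einv b)%E.
Proof.
move=> /[dup] a01 /andP[a_ge0 _]; case: x => [r| |].
- rewrite lte_einv // => /(mulr_lt1_right_nbhs a01)[b ab br].
  by exists b; rewrite // lte_einv // (le_trans a_ge0) ?ltW //; case/andP: ab.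
- by rewrite ltNge leey.
- move=> _; exists 1; first by case/andP: a01 => _ ->; rewrite lexx.
  by rewrite ltNye_eq /einv oner_eq0 invr1.
Qed.

End einv.

Section einv_level_sets.
Variables (R : realType) (Theta : Type) (f : Theta -> \bar R) (C : R -> set Theta).
Hypothesis C_level : forall a, 0 <= a <= 1 -> C a = [set th | (f th < einv a)%E].

Lemma einv_level_nonincreasing : set_nonincreasing C.
Proof.
move=> a b a_ge0 ab b_le1 th.
have a01 : 0 <= a <= 1 by rewrite a_ge0 (le_trans ab).
have b01 : 0 <= b <= 1 by rewrite b_le1 (le_trans a_ge0).
by rewrite (C_level a01) (C_level b01) => /lt_le_trans; apply; apply: einv_le.
Qed.

Lemma einv_level_cont_from_above : cont_from_above C.
Proof.
move=> a a_ge0 a_lt1; apply/seteqP; split=> th.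
  rewrite C_level ?a_ge0 ?ltW //= => /(@einv_right_cont _ a); rewrite a_ge0 a_lt1.
  case=> // b /andP[ab b_le1] fb; exists b => //.
  by rewrite C_level ?b_le1 ?(le_trans a_ge0 (ltW ab)).
case=> b [ab b_le1]; exact: einv_level_nonincreasing (ltW ab) b_le1 th.
Qed.

End einv_level_sets.

Section exclusion_evalue.
Variables (R : realType) (Theta : Type) (C : R -> set Theta).

(* The [maxe 0] only matters when [th] lies in every [C b], where the supremum
   is [-oo]. *)
Definition exclusion_evalue th : \bar R :=
  maxe 0%E (ereal_sup [set einv b | b in [set b | 0 <= b <= 1 /\ ~ C b th]]).

Lemma exclusion_evalue_ge0 th : (0 <= exclusion_evalue th)%E.
Proof. by rewrite le_max lexx. Qed.

Hypotheses (C_noninc : set_nonincreasing C) (C_cont : cont_from_above C).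

Lemma excluded_level_gt a b th :
  a <= 1 -> C a th -> 0 <= b -> ~ C b th -> a < b.
Proof.
move=> a_le1 Ca b_ge0 nCb; rewrite ltNge; apply/negP => ba.
exact/nCb/(C_noninc b_ge0 ba a_le1).
Qed.

Lemma exclusion_evalue_level a : 0 <= a <= 1 ->
  C a = [set th | (exclusion_evalue th < einv a)%E].
Proof.
move=> /andP[a_ge0 a_le1]; apply/seteqP; split=> th /=; last first.
  apply: contraPP => nCa; apply/negP; rewrite -leNgt le_max; apply/orP; right.
  by apply: ereal_sup_ubound; exists a => //; split => //; apply/andP.
move=> Ca; rewrite gt_max einv_gt0 //=.
have [a_lt1|] := ltP a 1; last first.
  move=> a_ge1; apply: le_lt_trans (einv_gt0 a_ge0).
  apply: ge_ereal_sup => _ [b [/andP[b_ge0 b_le1] nCb] <-].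
  by have := excluded_level_gt a_le1 Ca b_ge0 nCb; rewrite ltNge (le_trans b_le1).
move: Ca; rewrite C_cont // => -[b [ab b_le1] Cb].
apply: le_lt_trans (einv_lt a_ge0 ab).
apply: ge_ereal_sup => _ [c [/andP[c_ge0 _] nCc] <-].
have bc := excluded_level_gt b_le1 Cb c_ge0 nCc.
by apply: einv_le; [apply: le_trans (ltW ab)|exact: ltW].
Qed.

End exclusion_evalue.

Lemma probability_inhabited d (T : measurableType d) (R : realType)
  (P : probability T R) : inhabited T.
Proof.
apply: contrapT => T0; have setT0 : [set: T] = set0.
  by apply/seteqP; split => // x; case: T0; constructor.
by have := probability_setT P; rewrite setT0 measure0 => /eqP; rewrite eq_sym onee_eq0.
Qed.

Lemma null_indicator_evalue d (Omega : measurableType d) (R : realType)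
  (Theta : Type) (P : Theta -> probability Omega R)
  (N : set Omega) (c : Theta -> \bar R) :
  measurable N -> (forall th, P th N = 0%E) -> (forall th, (0 <= c th)%E) ->
  e_value_family P (fun th x => c th * (\1_N x)%:E)%E.
Proof.
move=> mN PN0 c_ge0 th.
have mE : measurable_fun [set: Omega] (fun x => c th * (\1_N x)%:E)%E.
  apply: emeasurable_funM; first exact: measurable_cst.
  by apply/measurable_EFinP; exact: measurable_indic.
split=> //; first by move=> x; rewrite mule_ge0 // lee_fin indicE ler0n.
rewrite (ae_eq_integral (cst 0%E)) // ?integral0 ?lee01 //.
exists N; split => [//||x /= Nx]; first exact: PN0.
apply: contrapT => nNx; apply: Nx => _.
by rewrite indicE memNset // mule0.
Qed.

Section uniform.
Variables (d : measure_display) (Omega : measurableType d) (R : realType).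
Variables (Theta : Type) (P : Theta -> probability Omega R) (U : Omega -> R).
Hypothesis U_unif : std_uniform_under_all P U.

Lemma measurable_uniform_preimage (A : set R) :
  measurable A -> measurable (U @^-1` A).
Proof. by case: U_unif => mU _ mA; rewrite -[U @^-1` A]setTI; exact: mU. Qed.

Lemma uniform_cdf th x :
  P th (U @^-1` `]-oo, x]) = (Num.min 1 (Num.max 0 x))%:E.
Proof.
have [_ cdf] := U_unif.
have mI y : measurable (U @^-1` `]-oo, y]).
  exact: measurable_uniform_preimage (measurable_itv _).
have cdf_le y z :
    y <= z -> (P th (U @^-1` `]-oo, y]) <= P th (U @^-1` `]-oo, z]))%E.
  move=> yz; apply: le_measure; rewrite ?inE // => w /=.
  by rewrite !in_itv /= => /le_trans; apply.
have [x_le0|x_gt0] := leP x 0.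
  rewrite min_r ?ler01 //; apply/le_anti; rewrite measure_ge0 andbT.
  by rewrite -(cdf th 0) ?lexx ?ler01 // cdf_le.
have [x_ge1|x_lt1] := leP 1 x.
  apply/le_anti; rewrite probability_le1 //=.
  by rewrite -(cdf th 1) ?lexx ?ler01 // cdf_le.
by rewrite cdf // !ltW.
Qed.

Lemma uniform_atomless th u : P th (U @^-1` [set u]) = 0%E.
Proof.
apply/le_anti; rewrite measure_ge0 andbT; apply/lee_addgt0Pr => e e_gt0.
have mI y : measurable (U @^-1` `]-oo, y]).
  exact: measurable_uniform_preimage (measurable_itv _).
have sub : U @^-1` [set u] `<=` U @^-1` `]-oo, u] `\` U @^-1` `]-oo, u - e].
  move=> w /= ->; rewrite !in_itv /= lexx; split=> //.
  by apply/negP; rewrite -ltNge ltrBlDr ltrDl.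
have mpt := measurable_uniform_preimage (measurable_set1 u).
have mD := measurableD (mI u) (mI (u - e)).
apply: le_trans (le_measure _ _ _ sub) _; rewrite ?inE //.
(* [measureD] is about contents, so the cdf is restated through that coercion. *)
have cdf y : (P th : {content set Omega -> \bar R}) (U @^-1` `]-oo, y]) = _ :=
  uniform_cdf th y.
rewrite measureD // ?cdf ?ltry //.
have -> : U @^-1` `]-oo, u] `&` U @^-1` `]-oo, u - e] = U @^-1` `]-oo, u - e].
  apply/setIidr => w /=; rewrite !in_itv /= => /le_trans; apply.
  by rewrite lerBlDr lerDl ltW.
rewrite !cdf add0e -EFinB lee_fin.
rewrite !minEle !maxEle; case: (leP 0 u) => ?; case: (leP 0 (u - e)) => ?.
all: case: (leP 1 u) => ?; case: (leP 1 (u - e)) => ?; rewrite ?ler10; lra.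
Qed.

End uniform.

Theorem lemma1 (R : realType) (d : measure_display) (Omega : measurableType d)
  (Theta : Type) (P : Theta -> probability Omega R) (U : Omega -> R)
  (HU : std_uniform_under_all P U) (theta0 : Theta) (C : R -> set Theta) :
  ECI P C <-> (set_nonincreasing C /\ cont_from_above C).
Proof.
split=> [[E [_ [_ [w C_level]]]]|[C_noninc C_cont]].
  split; first exact: einv_level_nonincreasing C_level.
  exact: einv_level_cont_from_above C_level.
have [w] := probability_inhabited (P theta0).
pose N := U @^-1` [set U w].
exists (fun th x => exclusion_evalue C th * (\1_N x)%:E)%E; split.
  apply: null_indicator_evalue => [|th|th].
  - exact/(measurable_uniform_preimage HU).
  - exact: uniform_atomless.
  - exact: exclusion_evalue_ge0.
exists theta0, w => a a01; rewrite (exclusion_evalue_level C_noninc C_cont a01).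
by apply/seteqP; split=> th /=; rewrite indicE mem_set // mule1.
Qed.
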